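(* For a topological space $X$ the following are equivalent: (1) $X$ is strongly star Hurewicz; (2) for every nonempty $A\subseteq X$ and every sequence $(\mathcal U_n:n\in\omega)$ of families of open subsets of $X$ with $\overline A\subseteq\bigcup\mathcal U_n$ for every $n$, there is a sequence $(F_n:n\in\omega)$ of finite subsets of $X$ such that every $x\in A$ belongs to $st(F_n,\mathcal U_n)$ for all but finitely many $n\in\omega$.
   Context: For a family $\mathcal U$ of subsets of $X$ and $A\subseteq X$, $st(A,\mathcal U)=\bigcup\{U\in\mathcal U: U\cap A\neq\emptyset\}$. $X$ is strongly star Hurewicz if for every sequence $(\mathcal U_n:n\in\omega)$ of open covers of $X$ there are finite $F_n\subseteq X$ such that every $x\in X$ belongs to $st(F_n,\mathcal U_n)$ for all but finitely many $n$. *)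

From mathcomp Require Import all_boot all_order.
From mathcomp Require Import all_classical all_reals all_analysis.
Set Implicit Arguments. Unset Strict Implicit. Unset Printing Implicit Defensive.
Local Open Scope classical_set_scope.

Definition star {X : Type} (A : set X) (U : set (set X)) : set X :=
  \bigcup_(V in U) [set x | V x /\ V `&` A !=set0].
Definition open_family {X : topologicalType} (U : set (set X)) : Prop :=
  forall V, U V -> open V.
Definition open_cover {X : topologicalType} (U : set (set X)) : Prop :=
  open_family U /\ setT `<=` \bigcup_(V in U) V.

Definition strongly_star_Hurewicz (X : topologicalType) : Prop :=
  forall U : nat -> set (set X), (forall n, open_cover (U n)) ->
  exists F : nat -> set X, (forall n, finite_set (F n)) /\
    forall x : X, \forall n \near \oo, star (F n) (U n) x.

(* Adjoining the open set X \ cl(A) to a family of open sets covering cl(A)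
   gives an open cover of X; since this extra member misses A, it never helps
   to star a point of A, so the finite sets produced for the enlarged covers
   work for the original families.  Conversely, take A = X. *)
From mathcomp Require Import all_boot all_order.
From mathcomp Require Import all_classical all_reals all_analysis.
Local Open Scope classical_set_scope.

Lemma open_cover_setU_closureC {X : topologicalType} {A : set X}
    {U : set (set X)} :
  open_family U -> closure A `<=` \bigcup_(V in U) V ->
  open_cover (U `|` [set ~` closure A]).
Proof.
move=> Uo clA_sub; split.
  by move=> V [/Uo //|->]; exact/closed_openC/closed_closure.
move=> x _; have [xclA|xNclA] := pselect (closure A x).
  by have [V UV Vx] := clA_sub x xclA; exists V => //; left.
by exists (~` closure A) => //; right.
Qed.

Lemma star_setU1_out {X : Type} (F : set X) (U : set (set X)) (W : set X)
    (x : X) :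
  ~ W x -> star F (U `|` [set W]) x -> star F U x.
Proof. by move=> Wx [V [UV|->] [Vx VF]]; [exists V|]. Qed.

Theorem proposition4p1 (X : topologicalType) :
  strongly_star_Hurewicz X <->
  (forall (A : set X), A !=set0 ->
   forall U : nat -> set (set X),
     (forall n, open_family (U n)) ->
     (forall n, closure A `<=` \bigcup_(V in U n) V) ->
     exists F : nat -> set X, (forall n, finite_set (F n)) /\
       forall x, A x -> \forall n \near \oo, star (F n) (U n) x).
Proof.
split.
- move=> ssH A _ U Uo Ucov.
  have [F [Ffin Fstar]] :=
    ssH _ (fun n => open_cover_setU_closureC (Uo n) (Ucov n)).
  exists F; split => // x Ax; apply: filterS (Fstar x) => n.
  by apply: star_setU1_out => /(_ (subset_closure Ax)).
- move=> H U Ucov.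
  have [[x0 _]|X0] := pselect (exists x : X, True); last first.
    by exists (fun=> set0); split => // x; case: X0; exists x.
  have [|F [Ffin Fstar]] := H setT (ex_intro _ x0 I) U (fun n => (Ucov n).1).
    by move=> n x _; apply: (Ucov n).2.
  by exists F; split => // x; apply: Fstar.
Qed.
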